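(* Let $n\in\mathbb{N}$, $p<1$ and $M\in(0,\frac1n)$. Then there exists $c>0$ such that $$\sum_{i=1}^n\frac{a_i^2+a_ib_i}{|a_i+b_i|^p}\ge c|a|^{2-p}$$ for all $a,b\in\mathbb{R}^n$ satisfying $|b|\le M|a|$.
   Context: $|\cdot|$ is the Euclidean norm. Each summand equals $a_i(a_i+b_i)|a_i+b_i|^{-p}$ and is understood to be $0$ when $a_i+b_i=0$. *)

From HB Require Import structures.
From mathcomp Require Import all_boot all_order all_algebra.
From mathcomp Require Import reals exp.
Set Implicit Arguments. Unset Strict Implicit. Unset Printing Implicit Defensive.
Import Order.TTheory GRing.Theory Num.Theory.
Local Open Scope ring_scope.

Definition enorm (R : realType) (n : nat) (a : 'rV[R]_n) : R :=
  Num.sqrt (\sum_(i < n) (a 0 i) ^+ 2).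

Definition summand (R : realType) (p x y : R) : R :=
  if x + y == 0 then 0 else x * (x + y) * powR `|x + y| (- p).

From HB Require Import structures.
From mathcomp Require Import all_boot all_order all_algebra.
From mathcomp Require Import reals exp.
From mathcomp Require Import ring lra.
Import Order.TTheory GRing.Theory Num.Theory.
Local Open Scope ring_scope.

(* Let j maximise |a_j| and put A = |a_j|, B = sum_i |b_i|, so that
   B <= sqrt n |b| <= sqrt n M |a| <= n M A < A.  With D = A - |b_j| the
   j-th summand is at least A D^(1-p), and every other summand is at least
   -|b_i| D^(1-p) because |b_i| <= D.  Hence the sum is at least
   (A - B) D^(1-p) >= (A - B)^(2-p) >= ((1 - n M) |a| / sqrt n)^(2-p). *)

Lemma sqr_sum_le (R : realDomainType) (I : finType) (x : I -> R) :
  (\sum_i x i) ^+ 2 <= #|I|%:R * \sum_i x i ^+ 2.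
Proof.
rewrite -(@ler_pMn2r _ 2) // expr2 mulr_suml -sumrMnl.
have -> : (#|I|%:R * \sum_i x i ^+ 2) *+ 2 =
    \sum_i \sum_j (x i ^+ 2 + x j ^+ 2).
  apply/esym; under eq_bigr do rewrite big_split /= sumr_const.
  by rewrite big_split /= sumr_const sumrMnl mulr_natl mulr2n.
apply: ler_sum => i _; rewrite mulr_sumr -sumrMnl.
by apply: ler_sum => j _; rewrite leif_mean_square_scaled.
Qed.

Section Summand.
Context {R : realType} {p : R}.
Hypothesis hp : p < 1.

Let q_gt0 : 0 < 1 - p. Proof. by rewrite subr_gt0. Qed.

Lemma mulr_powRN (t : R) : 0 <= t -> t * t `^ (- p) = t `^ (1 - p).
Proof.
by move=> t0; rewrite -(mulr_powRB1 t0 q_gt0) addrAC subrr add0r.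
Qed.

Lemma summandE (x y : R) : summand p x y = x * (x + y) * `|x + y| `^ (- p).
Proof. by rewrite /summand; case: eqP => [->|//]; rewrite mulr0 mul0r. Qed.

Lemma summand_ge (x y : R) :
  (`|x + y| - `|y|) * `|x + y| `^ (1 - p) <= summand p x y.
Proof.
rewrite summandE -mulr_powRN // mulrA ler_wpM2r ?powR_ge0 //.
have -> : x * (x + y) = (x + y) ^+ 2 - y * (x + y) by ring.
rewrite -real_normK ?num_real // mulrBl -expr2 lerB // -normrM.
exact: ler_norm.
Qed.

Lemma summand_ge_neg (x y D : R) : `|y| <= D ->
  - (`|y| * D `^ (1 - p)) <= summand p x y.
Proof.
move=> yD; apply: le_trans (summand_ge x y).
have t0 : 0 <= `|x + y| by [].
have [yt|ty] := lerP `|y| `|x + y|.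
  apply: (@le_trans _ _ 0); first by rewrite oppr_le0 mulr_ge0 ?powR_ge0.
  by rewrite mulr_ge0 ?subr_ge0 ?powR_ge0.
have tD : `|x + y| <= D by lra.
have : `|x + y| `^ (1 - p) <= D `^ (1 - p).
  by rewrite ge0_ler_powR ?nnegrE ?(ltW q_gt0) // (le_trans t0 tD).
have := powR_ge0 `|x + y| (1 - p); have := normr_ge0 y.
nra.
Qed.

Lemma summand_ge_dominant (x y : R) : `|y| <= `|x| ->
  `|x| * (`|x| - `|y|) `^ (1 - p) <= summand p x y.
Proof.
move=> yx; have xs0 : 0 <= x * (x + y).
  rewrite mulrDr -expr2 -real_normK ?num_real // expr2.
  have := ler_wpM2l (normr_ge0 x) yx; have := ler_norm (- (x * y)).
  rewrite normrN normrM; lra.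
rewrite summandE -(ger0_norm xs0) normrM -mulrA mulr_powRN //.
by rewrite ler_wpM2l // ge0_ler_powR ?nnegrE ?(ltW q_gt0) ?subr_ge0 ?lerB_normD.
Qed.

Lemma sum_summand_ge {I : finType} (x y : I -> R) (j : I) :
    \sum_i `|y i| <= `|x j| ->
  (`|x j| - \sum_i `|y i|) `^ (2 - p) <= \sum_i summand p (x i) (y i).
Proof.
rewrite (bigD1 j) //=; set B := \sum_(i | i != j) _ => yx.
have B0 : 0 <= B by rewrite sumr_ge0.
have yj0 : 0 <= `|y j| by [].
have yjx : `|y j| <= `|x j| by lra.
set D : R := `|x j| - `|y j|.
have yiD i : i != j -> `|y i| <= D.
  move=> ij; have : `|y i| <= B by rewrite /B (bigD1 i) //= lerDl sumr_ge0.
  rewrite /D; lra.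
have sum_rest : - (B * D `^ (1 - p)) <= \sum_(i | i != j) summand p (x i) (y i).
  rewrite mulr_suml -sumrN; apply: ler_sum => i ij.
  exact/summand_ge_neg/yiD.
have T0 : 0 <= `|x j| - (`|y j| + B) by lra.
have r_gt0 : 0 < 2 - p by have := q_gt0; lra.
rewrite -(mulr_powRB1 T0 r_gt0) (_ : 2 - p - 1 = 1 - p); last by ring.
have TD : (`|x j| - (`|y j| + B)) `^ (1 - p) <= D `^ (1 - p).
  by rewrite ge0_ler_powR ?nnegrE ?(ltW q_gt0) // /D; lra.
have := summand_ge_dominant (x j) (y j) yjx; rewrite -/D => sum_j.
rewrite (bigD1 j) //=; apply: le_trans (lerD sum_j sum_rest).
rewrite -mulrBl ler_pM ?powR_ge0 //; lra.
Qed.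
End Summand.

Section EuclideanNorm.
Context {R : realType} {n : nat}.
Implicit Types a : 'rV[R]_n.

Lemma enorm_ge0 a : 0 <= enorm a.
Proof. exact: sqrtr_ge0. Qed.

Lemma sqr_enorm a : enorm a ^+ 2 = \sum_i a 0 i ^+ 2.
Proof. by rewrite sqr_sqrtr // sumr_ge0 // => i _; rewrite sqr_ge0. Qed.

Lemma sum_norm_le_enorm a : \sum_i `|a 0 i| <= Num.sqrt n%:R * enorm a.
Proof.
rewrite -ler_sqr ?nnegrE ?sumr_ge0 ?mulr_ge0 ?sqrtr_ge0 ?enorm_ge0 //.
rewrite exprMn sqr_sqrtr // sqr_enorm.
under [X in _ <= _ * X]eq_bigr do rewrite -real_normK ?num_real //.
by rewrite -[n in n%:R]card_ord sqr_sum_le.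
Qed.

Lemma enorm_le_max a j : (forall i, `|a 0 i| <= `|a 0 j|) ->
  enorm a <= Num.sqrt n%:R * `|a 0 j|.
Proof.
move=> amax; rewrite -sqrtr_sqr -sqrtrM // ler_wsqrtr //.
have -> : n%:R * a 0 j ^+ 2 = \sum_(i < n) a 0 j ^+ 2.
  by rewrite sumr_const card_ord mulr_natl.
apply: ler_sum => i _; rewrite -[a 0 i ^+ 2]real_normK ?num_real //.
by rewrite -[a 0 j ^+ 2]real_normK ?num_real // ler_sqr ?nnegrE ?amax.
Qed.

End EuclideanNorm.

Theorem lemma12 (R : realType) (n : nat) (p M : R)
  (hp : p < 1) (hM0 : 0 < M) (hM1 : M < 1 / n%:R) :
  exists2 c : R, 0 < c &
    forall a b : 'rV[R]_n, enorm b <= M * enorm a ->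
      c * powR (enorm a) (2 - p) <= \sum_(i < n) summand p (a 0 i) (b 0 i).
Proof.
(* 1 / 0 = 0 in a field, so hM1 excludes n = 0. *)
have n_gt0 : (0 < n)%N by case: n hM1 => //; rewrite mul1r invr0; lra.
have N_gt0 : 0 < n%:R :> R by rewrite ltr0n.
have NM_lt1 : n%:R * M < 1 by rewrite mulrC -ltr_pdivlMr // mul1r -div1r.
set c := (1 - n%:R * M) / Num.sqrt n%:R.
have c_ge0 : 0 <= c by rewrite divr_ge0 ?sqrtr_ge0 // subr_ge0 ltW.
exists (c `^ (2 - p)) => [|a b hb].
  by rewrite powR_gt0 // divr_gt0 ?sqrtr_gt0 // subr_gt0.
have [j _ amax] := @arg_maxP _ _ _ (Ordinal n_gt0) predT (fun i => `|a 0 i|) isT.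
have a_le := enorm_le_max a j (fun i => amax i isT).
have b_le : \sum_i `|b 0 i| <= n%:R * M * `|a 0 j|.
  apply: (le_trans (sum_norm_le_enorm b)).
  rewrite -[n%:R in X in _ <= X](sqr_sqrtr (ltW N_gt0)) expr2 -!mulrA.
  rewrite ler_wpM2l ?sqrtr_ge0 // (le_trans hb) // mulrCA.
  by rewrite ler_wpM2l // ltW.
have b_le_a : \sum_i `|b 0 i| <= `|a 0 j|.
  by apply: le_trans b_le _; rewrite ler_piMl // ltW.
have ca_le : c * enorm a <= `|a 0 j| - \sum_i `|b 0 i|.
  apply: le_trans (ler_wpM2l c_ge0 a_le) _.
  rewrite mulrA divfK ?sqrtr_eq0 -?ltNge // mulrBl mul1r.
  exact: lerB.
rewrite -powRM ?enorm_ge0 //.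
apply: le_trans _ (sum_summand_ge hp (a 0) (b 0) j b_le_a).
by rewrite ge0_ler_powR ?nnegrE ?(mulr_ge0 c_ge0) ?enorm_ge0 ?subr_ge0 //; lra.
Qed.
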